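(* Let $\tilde B^{(r,s)}_{n,k}=[x^ny^k]\frac{1}{x}\mathrm{Rev}\left(\frac{x(1-yx)}{1+rx+sx^2}\right)$ and $\tilde B^{(r,s)}_n(y)=\sum_{k=0}^n\tilde B^{(r,s)}_{n,k}y^k$. Then: (i) the polynomials $\tilde B^{(r,s)}_n(y)$ are the moments of the orthogonal polynomials with coefficient array the Riordan array $$\left(\frac{1+xy}{1+(r+2y)x+(s+ry+y^2)x^2},\ \frac{x}{1+(r+2y)x+(s+ry+y^2)x^2}\right),$$ i.e. the first column of the inverse of this array has generating function $\sum_n\tilde B^{(r,s)}_n(y)x^n$; (ii) $$\sum_{n\ge0}\tilde B^{(r,s)}_n(y)x^n=\cfrac{1}{1-(r+y)x-\cfrac{(s+ry+y^2)x^2}{1-(r+2y)x-\cfrac{(s+ry+y^2)x^2}{1-(r+2y)x-\cdots}}}.$$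
   Context: A Riordan array $(g(x),f(x))$ is the lower-triangular matrix with $(n,k)$ entry $[x^n]g(x)f(x)^k$; moments are the entries of the first column of its inverse. Continued fractions are formal power series limits of convergents. $\mathrm{Rev}$ is compositional inverse in $x$. *)

(* Formal power series in x are modelled as coefficient
   functions  nat -> A  over a commutative ring A; the paper's variable y is
   the polynomial variable 'X of A := {poly R}. *)
From HB Require Import structures.
From mathcomp Require Import all_boot all_order all_algebra.
Set Implicit Arguments. Unset Strict Implicit. Unset Printing Implicit Defensive.
Import Order.TTheory GRing.Theory Num.Theory.
Local Open Scope ring_scope.

Section FPS.
Variable A : comNzRingType.

Definition fps := nat -> A.

Definition fadd (f g : fps) : fps := fun n => f n + g n.
Definition fsub (f g : fps) : fps := fun n => f n - g n.
Definition fmul (f g : fps) : fps := fun n => \sum_(i < n.+1) f i * g (n - i)%N.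
Definition fone : fps := fun n => (n == 0)%:R.
Definition fX : fps := fun n => (n == 1)%:R.
Definition fpoly (p : seq A) : fps := fun n => nth 0 p n.
Definition fpow (f : fps) (k : nat) : fps := iter k (fmul f) fone.

(* composition f(g(x)), meaningful when g 0 = 0 *)
Definition fcomp (f g : fps) : fps :=
  fun n => \sum_(k < n.+1) f k * fpow g k n.

(* multiplicative inverse 1/q of a series with q 0 = 1:
   1/q = sum_k (1 - q)^k, and (1-q)^k = O(x^k). *)
Definition finv1 (q : fps) : fps :=
  fun n => \sum_(k < n.+1) fpow (fsub fone q) k n.

(* compositional inverse Rev f of a series f = x + O(x^2) (f 0 = 0, f 1 = 1):
   the unique g with g 0 = 0 and f(g(x)) = x, i.e. g = x - (f - x)(g(x)).
   The n-th coefficient is stable after n+1 fixed-point iterations. *)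
Definition frev (f : fps) : fps :=
  fun n => iter n.+1 (fun g => fsub fX (fcomp (fsub f fX) g)) (fun _ => 0) n.

Definition riordan (G F : fps) (n k : nat) : A := fmul G (fpow F k) n.

Definition first_col_of_inverse (L : nat -> nat -> A) (c : nat -> A) : Prop :=
  forall n, \sum_(k < n.+1) L n k * c k = (n == 0)%:R.

(* Convergents of the J-fraction
   1/(1 - a_j x - b_{j+1} x^2/(1 - a_{j+1} x - b_{j+2} x^2/( ... /(1 - a_{j+d} x))))
   of depth d starting at level j. *)
Fixpoint jconv (a b : nat -> A) (d j : nat) : fps :=
  match d with
  | 0 => finv1 (fpoly [:: 1; - a j])
  | d'.+1 => finv1 (fsub (fpoly [:: 1; - a j])
                         (fmul (fpoly [:: 0; 0; b j.+1]) (jconv a b d' j.+1)))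
  end.

Definition fps_limit (C : nat -> fps) (S : fps) : Prop :=
  forall n, exists M, forall m, (M <= m)%N -> C m n = S n.

End FPS.

Section Bt.
Variables (R : comNzRingType) (r s : R).

Definition useries : fps {poly R} :=
  fmul (fpoly [:: 0; 1; - 'X]) (finv1 (fpoly [:: 1; r%:P; s%:P])).

Definition Btnk (n k : nat) : R := (frev useries n.+1)`_k.

Definition Bt (n : nat) : {poly R} := \sum_(k < n.+1) Btnk n k *: 'X^k.

Definition Dser : fps {poly R} :=
  fpoly [:: 1; r%:P + 2%:R * 'X; s%:P + r%:P * 'X + 'X^2].
Definition Gser : fps {poly R} := fmul (fpoly [:: 1; 'X]) (finv1 Dser).
Definition Fser : fps {poly R} := fmul (fpoly [:: 0; 1]) (finv1 Dser).

Definition alphaB (j : nat) : {poly R} :=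
  if j == 0%N then r%:P + 'X else r%:P + 2%:R * 'X.
Definition betaB (j : nat) : {poly R} := s%:P + r%:P * 'X + 'X^2.

End Bt.

From HB Require Import structures.
From mathcomp Require Import all_boot all_order all_algebra.
From mathcomp Require Import ring zify.
From Stdlib Require Import Setoid Morphisms.
Set Implicit Arguments. Unset Strict Implicit. Unset Printing Implicit Defensive.
Import GRing.Theory.
Local Open Scope ring_scope.

(* Work with truncations modulo x^N, which are polynomials in x over {poly R}
   (the inner variable being y), so that congruence modulo x^N is compatible
   with sums, products and composition.  Put u = x(1-yx)/(1+rx+sx^2),
   g = Rev u = x B, t = x/(1+yx) and (G, F) the Riordan array of the
   statement.  A direct computation gives u(t) = F; since composition with
   u = x + O(x^2) is injective, u(g(F)) = F forces g(F) = t, i.e.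
   F B(F) = t, which rearranges to G B(F) = 1: B is the first column of the
   inverse of (G, F).  From u(g) = x one gets B - yxB^2 = 1 + rxB + sx^2B^2,
   whence C = B/(1 - yxB) satisfies C (1 - (r+2y)x - (s+ry+y^2)x^2 C) = 1 and
   B (1 - (r+y)x - (s+ry+y^2)x^2 C) = 1; inverting these relations level by
   level, the d-th convergent agrees with B through x^d. *)

Section CongX.
Variable A : comNzRingType.
Implicit Types (p q u v a b P Q C : {poly A}).

Definition congX N p q := exists k, p - q = 'X^N * k.

Global Instance congX_equiv N : Equivalence (congX N).
Proof.
split=> [p | p q [k e] | p q w [k e] [l f]].
- by exists 0; rewrite subrr mulr0.
- by exists (- k); rewrite -opprB e mulrN.
- by exists (k + l); rewrite mulrDr -e -f addrA subrK.
Qed.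

Global Instance congX_add N : Proper (congX N ==> congX N ==> congX N) +%R.
Proof.
move=> p p' [k e] q q' [l f]; exists (k + l).
by rewrite mulrDr -e -f opprD addrACA.
Qed.

Global Instance congX_opp N : Proper (congX N ==> congX N) (@GRing.opp {poly A}).
Proof. by move=> p p' [k e]; exists (- k); rewrite -opprD e mulrN. Qed.

Global Instance congX_mul N : Proper (congX N ==> congX N ==> congX N) *%R.
Proof.
move=> p p' [k e] q q' [l f]; exists (k * q + p' * l).
by rewrite mulrDr mulrA -e mulrCA -f mulrBl mulrBr addrA subrK.
Qed.

Global Instance congX_exp N : Proper (congX N ==> eq ==> congX N) (@GRing.exp {poly A}).
Proof.
move=> p p' e k _ <-; elim: k => [|k IH]; first by rewrite !expr0; reflexivity.
by rewrite !exprS; apply: congX_mul.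
Qed.

Lemma congX_eq N p q : p = q -> congX N p q.
Proof. by move=> ->; reflexivity. Qed.

Lemma congX0 p q : congX 0 p q.
Proof. by exists (p - q); rewrite mul1r. Qed.

Lemma congX_leq M N p q : (M <= N)%N -> congX N p q -> congX M p q.
Proof. by move=> le [k e]; exists ('X^(N - M) * k); rewrite mulrA -exprD subnKC. Qed.

Lemma coef_congX N p q n : congX N p q -> (n < N)%N -> p`_n = q`_n.
Proof. by move=> [k e] lt; apply/eqP; rewrite -subr_eq0 -coefB e coefXnM lt. Qed.

Lemma congX_coef N p q : (forall n, (n < N)%N -> p`_n = q`_n) -> congX N p q.
Proof.
move=> pq; set d := p - q; exists (\poly_(i < size d) d`_(i + N)); apply/polyP => i.
rewrite coefXnM; case: ltnP => iN; first by rewrite coefB pq ?subrr.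
rewrite coef_poly; case: ltnP => [_|]; first by rewrite subnK.
by move/leq_sizeP; apply; rewrite leq_subr.
Qed.

Lemma mulX_coef0 p : p`_0 = 0 -> exists p', p = 'X * p'.
Proof.
move=> p0; have [k e] : congX 1 p 0 by apply: congX_coef => -[|] // _; rewrite coef0.
by exists k; rewrite -[p]subr0 e.
Qed.

Lemma congX_mulX N p q : congX N.+1 ('X * p) ('X * q) <-> congX N p q.
Proof.
split=> [pq|[k e]]; last by exists k; rewrite -mulrBr e mulrA -exprS.
by apply: congX_coef => n lt; have := coef_congX (n := n.+1) pq; rewrite !coefXM; apply.
Qed.

Lemma congX_mul_cancel N p q u v :
  congX N (u * v) 1 -> congX N (p * u) (q * u) -> congX N p q.
Proof.
move=> uv pq; rewrite -[p]mulr1 -[q]mulr1 -uv !mulrA pq; reflexivity.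
Qed.

Lemma congX_inv_unique N m P Q P' Q' :
  congX N (P * Q) 1 -> congX N (P' * Q') 1 -> congX m Q Q' ->
  congX (minn N m) P P'.
Proof.
move=> PQ PQ' QQ'.
have [le_N le_m] := (geq_minl N m, geq_minr N m).
transitivity (P * (P' * Q')); first by rewrite (congX_leq le_N PQ') mulr1; reflexivity.
transitivity (P' * (P * Q)); last by rewrite (congX_leq le_N PQ) mulr1; reflexivity.
rewrite (congX_leq le_m QQ'); apply: congX_eq; ring.
Qed.

Lemma congX_geom N p : congX N ((1 - 'X * p) * \sum_(k < N) ('X * p) ^+ k) 1.
Proof.
have e := subrX1 ('X * p) N; exists (- p ^+ N).
by rewrite mulrN -exprMn -[1 - _]opprB mulNr -e; ring.
Qed.

Lemma congX_inv N p : p`_0 = 1 -> exists q, congX N (p * q) 1.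
Proof.
move=> p0; have [p' e] : exists p', 1 - p = 'X * p'.
  by apply: mulX_coef0; rewrite coefB coef1 p0 subrr.
have -> : p = 1 - 'X * p' by rewrite -e; ring.
by exists (\sum_(k < N) ('X * p') ^+ k); apply: congX_geom.
Qed.

Lemma coef0_comp p a : a`_0 = 0 -> (p \Po a)`_0 = p`_0.
Proof.
move=> a0; elim/poly_ind: p => [|p c IH]; first by rewrite comp_poly0 coef0.
by rewrite comp_polyD comp_polyM comp_polyX comp_polyC !coefD coefMX coefM big_ord1 a0 mulr0.
Qed.

Global Instance congX_comp N : Proper (congX N ==> eq ==> congX N) (@comp_poly A).
Proof.
move=> a b [k e] P _ <-; elim/poly_ind: P => [|P c [l f]].
  by rewrite !comp_poly0; reflexivity.
exists (l * a + (P \Po b) * k).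
rewrite !comp_polyD !comp_polyM !comp_polyX !comp_polyC opprD addrACA subrr addr0.
by rewrite mulrDr mulrA -f mulrCA -e; ring.
Qed.

Lemma congX_compl N P Q a : a`_0 = 0 -> congX N P Q -> congX N (P \Po a) (Q \Po a).
Proof.
move=> a0 [k e]; have [a' ->] := mulX_coef0 a0.
exists (a' ^+ N * (k \Po 'X * a')).
by rewrite -comp_polyB e comp_polyM comp_Xn_poly exprMn mulrA.
Qed.

(* W is the difference quotient (P(a) - P(b))/(a - b), with constant term P'(0). *)
Lemma comp_polyB_factor P a b : a`_0 = 0 -> b`_0 = 0 ->
  exists2 W, (P \Po a) - (P \Po b) = (a - b) * W & W`_0 = P`_1.
Proof.
move=> a0 b0; elim/poly_ind: P => [|P c [W e W0]].
  by exists 0; rewrite ?comp_poly0 ?subrr ?mulr0 ?coef0.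
exists (W * a + (P \Po b)).
  rewrite !comp_polyD !comp_polyM !comp_polyX !comp_polyC.
  have -> : P \Po a = (P \Po b) + (a - b) * W by rewrite -e addrC subrK.
  ring.
by rewrite !coefD coefMX coefC /= addr0 coefM big_ord1 a0 mulr0 add0r coef0_comp.
Qed.

Lemma congX_comp_contract m C a b : C`_1 = 0 -> a`_0 = 0 -> b`_0 = 0 ->
  congX m a b -> congX m.+1 (C \Po a) (C \Po b).
Proof.
move=> C1 a0 b0 [k e]; have [W eW W0] := comp_polyB_factor C a0 b0.
have [w eWw] := mulX_coef0 (etrans W0 C1).
by exists (k * w); rewrite eW e eWw exprSr; ring.
Qed.

Lemma congX_comp_cancel N P a b : P`_1 = 1 -> a`_0 = 0 -> b`_0 = 0 ->
  congX N (P \Po a) (P \Po b) -> congX N a b.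
Proof.
move=> P1 a0 b0 Pab; set C := P - 'X.
have C1 : C`_1 = 0 by rewrite coefB coefX P1 subrr.
have PC z : z = (P \Po z) - (C \Po z) by rewrite /C comp_polyB comp_polyX; ring.
suff: forall m, (m <= N)%N -> congX m a b by apply.
elim=> [|m IH] lt_mN; first exact: congX0.
rewrite (PC a) (PC b); apply: congX_add; first exact: congX_leq lt_mN Pab.
by apply: congX_opp; apply: congX_comp_contract => //; apply: IH; apply: ltnW.
Qed.

End CongX.

Section Truncation.
Variable A : comNzRingType.
Implicit Types (f g h q : fps A).

Definition trunc N f : {poly A} := \poly_(i < N) f i.

Lemma coef_trunc N f n : (n < N)%N -> (trunc N f)`_n = f n.
Proof. by move=> lt; rewrite coef_poly lt. Qed.

Lemma trunc_coef0 N f : f 0%N = 0 -> (trunc N f)`_0 = 0.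
Proof. by move=> f0; rewrite coef_poly; case: ifP. Qed.

Lemma trunc_leq M N f : (M <= N)%N -> congX M (trunc M f) (trunc N f).
Proof.
by move=> le; apply: congX_coef => n lt; rewrite !coef_trunc // (leq_trans lt).
Qed.

Lemma trunc_sub N f g : trunc N (fsub f g) = trunc N f - trunc N g.
Proof. by apply/polyP => i; rewrite coefB !coef_poly; case: ifP; rewrite ?subr0. Qed.

Lemma trunc_mul N f g : congX N (trunc N (fmul f g)) (trunc N f * trunc N g).
Proof.
apply: congX_coef => n lt; rewrite coef_trunc // coefM.
by apply: eq_bigr => -[j /= lj] _; rewrite !coef_trunc //; lia.
Qed.

Lemma trunc_one N : congX N (trunc N (fone A)) 1.
Proof. by apply: congX_coef => n lt; rewrite coef_trunc // coef1. Qed.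

Lemma trunc_X N : congX N (trunc N (fX A)) 'X.
Proof. by apply: congX_coef => n lt; rewrite coef_trunc // coefX. Qed.

Lemma trunc_fpoly N s : congX N (trunc N (fpoly s)) (Poly s).
Proof. by apply: congX_coef => n lt; rewrite coef_trunc // coef_Poly. Qed.

Lemma trunc_pow N g k : congX N (trunc N (fpow g k)) (trunc N g ^+ k).
Proof.
elim: k => [|k IH]; first by rewrite expr0 trunc_one; reflexivity.
by rewrite exprS /fpow iterS trunc_mul IH; reflexivity.
Qed.

Lemma comp_trunc N f p : trunc N f \Po p = \sum_(i < N) f i *: p ^+ i.
Proof.
by rewrite /trunc poly_def linear_sum; apply: eq_bigr => i _; rewrite linearZ /= comp_Xn_poly.
Qed.

Lemma fpow_coef_small g k n : g 0%N = 0 -> (n < k)%N -> fpow g k n = 0.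
Proof.
move=> g0 lt; rewrite -(coef_trunc _ (ltnSn n)) (coef_congX (trunc_pow _ _ _)) //.
have [g' ->] := mulX_coef0 (trunc_coef0 n.+1 g0).
by rewrite exprMn coefXnM lt.
Qed.

Lemma trunc_comp N f g : g 0%N = 0 ->
  congX N (trunc N (fcomp f g)) (trunc N f \Po trunc N g).
Proof.
move=> g0; apply: congX_coef => n lt.
rewrite coef_trunc // comp_trunc coef_sum /fcomp.
rewrite (big_ord_widen N (fun i => f i * fpow g i n)) // big_mkcond /=.
apply: eq_bigr => -[i /= _] _; rewrite coefZ.
rewrite -(coef_congX (trunc_pow _ _ _) lt) coef_trunc //.
by case: ltnP => // lt_ni; rewrite fpow_coef_small // mulr0.
Qed.

Lemma trunc_finv1 N q : q 0%N = 1 -> congX N (trunc N q * trunc N (finv1 q)) 1.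
Proof.
move=> q0; set h := fsub (fone A) q.
have h0 : h 0%N = 0 by rewrite /h /fsub q0 subrr.
have [h' eh] := mulX_coef0 (trunc_coef0 N h0).
have -> : congX N (trunc N q) (1 - 'X * h').
  by rewrite -eh /h trunc_sub trunc_one; apply: congX_eq; ring.
suff -> : congX N (trunc N (finv1 q)) (\sum_(k < N) ('X * h') ^+ k) by apply: congX_geom.
apply: congX_coef => n lt; rewrite coef_trunc // coef_sum /finv1.
rewrite (big_ord_widen N (fun k => fpow h k n)) // big_mkcond /=.
apply: eq_bigr => -[k /= _] _; rewrite -eh -(coef_congX (trunc_pow _ _ _) lt) coef_trunc //.
by case: ltnP => // lt_nk; rewrite fpow_coef_small.
Qed.

End Truncation.

Section CoefMap.
Variables (A B : comNzRingType) (phi : {rmorphism A -> B}).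

Lemma fpow_map (h : fps A) (h' : fps B) : (forall m, h' m = phi (h m)) ->
  forall k n, fpow h' k n = phi (fpow h k n).
Proof.
move=> hh'; elim=> [|k IH] n; first by rewrite /fpow /= /fone rmorph_nat.
rewrite /fpow !iterS -!/(fpow _ k) /fmul rmorph_sum; apply: eq_bigr => i _.
by rewrite hh' IH rmorphM.
Qed.

Lemma finv1_map (q : fps A) (q' : fps B) : (forall m, q' m = phi (q m)) ->
  forall n, finv1 q' n = phi (finv1 q n).
Proof.
move=> qq' n; rewrite /finv1 rmorph_sum; apply: eq_bigr => k _.
by apply: fpow_map => m; rewrite /fsub /fone qq' rmorphB rmorph_nat.
Qed.

End CoefMap.

Section CompositionalInverse.
Variable A : comNzRingType.

Definition rev_step (f g : fps A) : fps A := fsub (fX A) (fcomp (fsub f (fX A)) g).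
Definition rev_iter f j : fps A := iter j (rev_step f) (fun _ => 0).

Lemma frevE f n : frev f n = rev_iter f n.+1 n.
Proof. by []. Qed.

Variables (f : fps A) (N : nat).
Hypotheses (f0 : f 0%N = 0) (f1 : f 1%N = 1).

Lemma rev_iter0 j : rev_iter f j 0%N = 0.
Proof.
case: j => [|j] //; rewrite /rev_iter iterS /rev_step /fsub /fcomp big_ord1 f0.
by rewrite /fX /= subrr mul0r subrr.
Qed.

Lemma frev0 : frev f 0%N = 0.
Proof. exact: (rev_iter0 1). Qed.

Let C := trunc N (fsub f (fX A)).

Let C1 : C`_1 = 0.
Proof. by rewrite coef_poly; case: ifP; rewrite // /fsub f1 subrr. Qed.

Let trunc_rev_step g : g 0%N = 0 ->
  congX N (trunc N (rev_step f g)) ('X - (C \Po trunc N g)).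
Proof. by move=> g0; rewrite /rev_step trunc_sub trunc_X trunc_comp //; reflexivity. Qed.

(* rev_step is a contraction for the X-adic distance, as C = O(x^2). *)
Let trunc_rev_iter_stable j k : (j <= k)%N -> (j <= N)%N ->
  congX j (trunc N (rev_iter f j)) (trunc N (rev_iter f k)).
Proof.
elim: j k => [|j IH] [|k] // le_jk le_jN; try exact: congX0.
rewrite /rev_iter !iterS -!/(rev_iter f _).
rewrite !(congX_leq le_jN (trunc_rev_step (rev_iter0 _))).
apply: congX_add; first reflexivity.
apply: congX_opp; apply: congX_comp_contract; rewrite ?trunc_coef0 ?rev_iter0 //.
exact: IH (ltnW le_jN).
Qed.

Lemma frev_comp : congX N (trunc N f \Po trunc N (frev f)) 'X.
Proof.
set g := trunc N (frev f).
have g0 : g`_0 = 0 by apply: trunc_coef0; apply: frev0.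
have g_iter : congX N g (trunc N (rev_iter f N)).
  apply: congX_coef => n lt; rewrite [LHS]coef_trunc // frevE.
  by rewrite -[LHS](coef_trunc _ lt) (coef_congX (trunc_rev_iter_stable lt lt)).
have g_fix : congX N g ('X - (C \Po g)).
  rewrite {1}g_iter (trunc_rev_iter_stable (leqnSn N) (leqnn N)).
  by rewrite (trunc_rev_step (rev_iter0 _)) -g_iter; reflexivity.
have -> : trunc N f = C + trunc N (fX A) by rewrite /C trunc_sub subrK.
rewrite comp_polyD (congX_compl g0 (@trunc_X A N)) comp_polyX {2}g_fix.
apply: congX_eq; ring.
Qed.

End CompositionalInverse.

Section RevDegree.
Variables (R : comNzRingType) (f : fps {poly R}).
Hypotheses (f0 : f 0%N = 0) (f1 : f 1%N = 1).
Hypothesis f_coef : forall k b, (2 <= b)%N -> (f k)`_b = 0.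

Definition strictly_lower (h : fps {poly R}) :=
  forall n j, (n <= j)%N -> (h n)`_j = 0.

Lemma fpow_strictly_lower h i n j :
  strictly_lower h -> (n < j + i)%N -> (fpow h i n)`_j = 0.
Proof.
move=> h_low; elim: i n j => [|i IH] n j lt.
  by rewrite /fpow /=; case: n lt => [|n] lt; rewrite /= ?coef0 // coef1; case: j lt.
rewrite /fpow iterS -/(fpow h i) /fmul coef_sum big1 // => -[k /= lk] _.
rewrite coefM big1 // => -[l /= ll] _.
have [le_kl | lt_lk] := leqP k l; first by rewrite h_low // mul0r.
by rewrite IH ?mulr0 //; lia.
Qed.

Let shift_coef k b : ((k <= 1) || (2 <= b))%N -> (fsub f (fX _) k)`_b = 0.
Proof.
rewrite /fsub /fX coefB; case/orP => [|le2b].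
  by case: k => [|[|k]] // _; rewrite ?f0 ?f1 /= ?coef0 ?coef1 subrr.
by rewrite f_coef // coefMn coef1; case: b le2b => [|[|b]] //; rewrite mul0rn subr0.
Qed.

Lemma rev_step_strictly_lower h : strictly_lower h -> strictly_lower (rev_step f h).
Proof.
move=> h_low n j le_nj; rewrite /rev_step /fsub coefB /fcomp coef_sum big1 ?subr0.
  rewrite /fX coefMn coef1; case: j le_nj => [|j] le_nj; last by rewrite mul0rn.
  by case: n le_nj.
move=> -[k /= lk] _; rewrite coefM big1 // => -[l /= ll] _.
have [vanish | ] := boolP ((k <= 1) || (2 <= l))%N; first by rewrite shift_coef ?mul0r.
by rewrite negb_or -!ltnNge => /andP [lt1k ltl2]; rewrite fpow_strictly_lower ?mulr0 //; lia.
Qed.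

Lemma frev_strictly_lower : strictly_lower (frev f).
Proof.
move=> n j le_nj; rewrite frevE; move: n.+1 => m.
elim: m n j le_nj => [|m IH] n j le_nj; first by rewrite coef0.
by rewrite /rev_iter iterS; apply: rev_step_strictly_lower.
Qed.

End RevDegree.

Lemma riordan_first_col (A : comNzRingType) (G F c : fps A) :
  (forall n, congX n.+1 (trunc n.+1 G * (trunc n.+1 c \Po trunc n.+1 F)) 1) ->
  first_col_of_inverse (riordan G F) c.
Proof.
move=> Gc n; rewrite -(coef1 _ n) -(coef_congX (Gc n) (ltnSn n)).
rewrite comp_trunc mulr_sumr coef_sum; apply: eq_bigr => k _.
have GFk : congX n.+1 (trunc n.+1 (fmul G (fpow F k))) (trunc n.+1 G * trunc n.+1 F ^+ k).
  by rewrite trunc_mul trunc_pow; reflexivity.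
by rewrite -scalerAr coefZ mulrC -(coef_congX GFk) ?coef_trunc.
Qed.

Section JFraction.
Variables (A : comNzRingType) (a b : nat -> A) (S : nat -> {poly A}) (M : nat).

Let den j p : {poly A} := 1 - (a j)%:P * 'X - (b j.+1)%:P * 'X^2 * p.

Hypothesis S_rec : forall j, congX M (S j * den j (S j.+1)) 1.

Let congX_den m j p q : congX m p q -> congX m.+2 (den j p) (den j q).
Proof.
move=> [k e]; exists (- (b j.+1)%:P * k).
have -> : den j p - den j q = - (b j.+1)%:P * 'X^2 * (p - q) by rewrite /den; ring.
by rewrite e -[m.+2]addn2 exprD; ring.
Qed.

Let finv1_den j q p : q 0%N = 1 -> congX M (trunc M q) (den j p) ->
  congX M (trunc M (finv1 q) * den j p) 1.
Proof. by move=> q0 qp; rewrite -qp mulrC; apply: trunc_finv1. Qed.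

Let trunc_jconv0 j : congX M (trunc M (jconv a b 0 j) * den j 0) 1.
Proof.
apply: finv1_den => //; rewrite trunc_fpoly /den /= !cons_poly_def mul0r add0r polyCN.
by apply: congX_eq; ring.
Qed.

Let trunc_jconvS d j :
  congX M (trunc M (jconv a b d.+1 j) * den j (trunc M (jconv a b d j.+1))) 1.
Proof.
apply: finv1_den; first by rewrite /fsub /fmul big_ord1 mul0r subr0.
rewrite trunc_sub trunc_mul !trunc_fpoly /den /= !cons_poly_def mul0r add0r polyCN polyC0.
by apply: congX_eq; ring.
Qed.

Lemma jconv_congX d j : congX (minn d.+1 M) (trunc M (jconv a b d j)) (S j).
Proof.
elim: d j => [|d IH] j.
  have := congX_inv_unique (trunc_jconv0 j) (S_rec j) (congX_den j (congX0 0 (S j.+1))).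
  by apply: congX_leq; lia.
have := congX_inv_unique (trunc_jconvS d j) (S_rec j) (congX_den j (IH j.+1)).
by apply: congX_leq; lia.
Qed.

End JFraction.

Section TildeB.
Variables (R : comNzRingType) (r s : R).
Local Notation u := (useries r s).
Local Notation PR := {poly {poly R}}.
Local Notation y := (('X : {poly R})%:P : PR).

Lemma useries0 : u 0%N = 0.
Proof. by rewrite /useries /fmul big_ord1 /fpoly /= mul0r. Qed.

Lemma useries1 : u 1%N = 1.
Proof.
rewrite /useries /fmul !big_ord_recr big_ord0 /fpoly /= subnn.
by rewrite /finv1 big_ord1 /fpow /= /fone mul0r !add0r mul1r.
Qed.

Lemma useries_coef k b : (2 <= b)%N -> (u k)`_b = 0.
Proof.
move=> le2b; rewrite /useries /fmul coef_sum big1 // => -[a /= _] _.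
have cst m : fpoly [:: 1; r%:P; s%:P] m = (fpoly [:: 1; r; s] m)%:P.
  by case: m => [|[|[|m]]] //=; rewrite /fpoly !nth_nil polyC0.
rewrite (finv1_map cst) coefMC /fpoly.
case: a => [|[|[|a]]] /=; rewrite ?nth_nil ?coef0 ?mul0r //.
  by rewrite coef1; case: b le2b => [|[|b]] // _; rewrite mul0r.
by rewrite coefN coefX; case: b le2b => [|[|b]] // _; rewrite oppr0 mul0r.
Qed.

Lemma Bt_frev n : Bt r s n = frev u n.+1.
Proof.
rewrite /Bt /Btnk -poly_def; apply/polyP => j; rewrite coef_poly.
case: ltnP => // le_nj; symmetry.
exact: frev_strictly_lower useries0 useries1 useries_coef _ _ le_nj.
Qed.

Variable n : nat.
Local Notation N := n.+2.
Local Notation U := (trunc N u).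
Local Notation g := (trunc N (frev u)).
Local Notation G := (trunc N (Gser r s)).
Local Notation F := (trunc N (Fser r s)).
Local Notation iQ := (trunc N (finv1 (fpoly [:: 1; r%:P; s%:P]))).
Local Notation iD := (trunc N (finv1 (Dser r s))).
Local Notation Q z := (1 + (r%:P)%:P * z + (s%:P)%:P * z ^+ 2 : PR).
Local Notation a := (r%:P + 2%:R * 'X : {poly R}).
Local Notation b := (s%:P + r%:P * 'X + 'X^2 : {poly R}).
Local Notation D := (1 + a%:P * 'X + b%:P * 'X^2 : PR).
Local Notation B := (trunc n.+1 (Bt r s)).

Lemma Q_iQ : congX N (Q 'X * iQ) 1.
Proof.
transitivity (trunc N (fpoly [:: 1; r%:P; s%:P]) * iQ); last exact: trunc_finv1.
rewrite trunc_fpoly.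
by rewrite /= !cons_poly_def mul0r add0r polyC1; apply: congX_eq; ring.
Qed.

Lemma D_iD : congX N (D * iD) 1.
Proof.
transitivity (trunc N (Dser r s) * iD); last exact: trunc_finv1.
rewrite trunc_fpoly.
by rewrite /= !cons_poly_def mul0r add0r polyC1; apply: congX_eq; ring.
Qed.

Lemma trunc_Gser : congX N G ((1 + y * 'X) * iD).
Proof.
rewrite /Gser trunc_mul trunc_fpoly /= !cons_poly_def mul0r add0r polyC1.
by apply: congX_eq; ring.
Qed.

Lemma trunc_Fser : congX N F ('X * iD).
Proof.
rewrite /Fser trunc_mul trunc_fpoly /= !cons_poly_def mul0r add0r polyC1 polyC0.
by apply: congX_eq; ring.
Qed.

Lemma useries_comp (z : PR) : z`_0 = 0 -> congX N ((U \Po z) * Q z) (z - y * z ^+ 2).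
Proof.
move=> z0; have Qz := congX_compl z0 Q_iQ.
rewrite comp_polyM !comp_polyD !comp_polyM !comp_polyC comp_polyX polyC1 in Qz.
have Uz : congX N U (('X - y * 'X^2) * iQ).
  rewrite /useries trunc_mul trunc_fpoly /= !cons_poly_def mul0r add0r polyC0 polyC1 polyCN.
  by apply: congX_eq; ring.
rewrite (congX_compl z0 Uz) comp_polyM comp_polyB comp_polyM comp_polyC comp_polyX comp_Xn_poly.
transitivity ((z - y * z ^+ 2) * (Q z * (iQ \Po z))); first by apply: congX_eq; ring.
by rewrite Qz mulr1; reflexivity.
Qed.

Lemma useries_comp_Fser iE : congX N ((1 + y * 'X) * iE) 1 ->
  congX N (U \Po ('X * iE)) F.
Proof.
move=> E_iE; set t := 'X * iE; set E := 1 + y * 'X.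
have t0 : t`_0 = 0 by rewrite coefXM.
have tE : congX N (t * E) 'X.
  transitivity ('X * (E * iE)); first by apply: congX_eq; rewrite /t; ring.
  by rewrite E_iE mulr1; reflexivity.
have num : congX N ((t - y * t ^+ 2) * E ^+ 2) 'X.
  transitivity ((t * E) * (E - y * (t * E))); first by apply: congX_eq; ring.
  by rewrite tE; apply: congX_eq; rewrite /E; ring.
have den : congX N (Q t * E ^+ 2) D.
  transitivity (E ^+ 2 + (r%:P)%:P * (t * E) * E + (s%:P)%:P * (t * E) ^+ 2).
    by apply: congX_eq; ring.
  by rewrite tE; apply: congX_eq; rewrite /E; ring.
apply: (congX_mul_cancel D_iD).
transitivity ((U \Po t) * (Q t * E ^+ 2)); first by rewrite den; reflexivity.
transitivity ((U \Po t) * Q t * E ^+ 2); first by apply: congX_eq; ring.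
rewrite (useries_comp t0) num trunc_Fser.
transitivity ('X * (D * iD)); first by rewrite D_iD mulr1; reflexivity.
by apply: congX_eq; ring.
Qed.

Lemma frev_comp_Fser iE : congX N ((1 + y * 'X) * iE) 1 ->
  congX N (g \Po F) ('X * iE).
Proof.
move=> E_iE.
have F0 : F`_0 = 0 by apply: trunc_coef0; rewrite /Fser /fmul big_ord1 /fpoly /= mul0r.
apply: (@congX_comp_cancel _ _ U).
- by rewrite coef_trunc // useries1.
- by rewrite coef0_comp // trunc_coef0 // frev0 // useries0.
- by rewrite coefXM.
rewrite comp_polyA (congX_compl F0 (frev_comp N useries0 useries1)) comp_polyX.
by symmetry; apply: useries_comp_Fser.
Qed.

Lemma trunc_frev_useries : g = 'X * B.
Proof.
apply/polyP => i; rewrite coefXM coef_poly.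
by case: i => [|i] /=; rewrite ?frev0 ?useries0 // coef_poly Bt_frev.
Qed.

Lemma Gser_Bt_Fser :
  congX n.+1 (trunc n.+1 (Gser r s) * (B \Po trunc n.+1 (Fser r s))) 1.
Proof.
rewrite (trunc_leq (Gser r s) (leqnSn n.+1)) (trunc_leq (Fser r s) (leqnSn n.+1)).
have [iE E_iE] : exists iE, congX N ((1 + y * 'X) * iE) 1.
  by apply: congX_inv; rewrite coefD coef1 coefMX addr0.
have FB : congX N (F * (B \Po F)) ('X * iE).
  by rewrite -(frev_comp_Fser E_iE) trunc_frev_useries comp_polyM comp_polyX; reflexivity.
apply/congX_mulX.
transitivity ((1 + y * 'X) * (F * (B \Po F)) * (D * iD)).
  by rewrite D_iD trunc_Gser trunc_Fser; apply: congX_eq; ring.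
rewrite FB D_iD mulr1.
transitivity ('X * ((1 + y * 'X) * iE)); first by apply: congX_eq; ring.
by rewrite E_iE mulr1; reflexivity.
Qed.

Lemma Bt_functional_eq : congX n.+1 (B - y * 'X * B ^+ 2)
  (1 + (r%:P)%:P * 'X * B + (s%:P)%:P * 'X^2 * B ^+ 2).
Proof.
have g0 : g`_0 = 0 by rewrite trunc_coef0 ?frev0 ?useries0.
have := useries_comp g0; rewrite (frev_comp N useries0 useries1) trunc_frev_useries => e.
apply/congX_mulX.
transitivity ('X * B - y * ('X * B) ^+ 2); first by apply: congX_eq; ring.
by rewrite -e; apply: congX_eq; ring.
Qed.

Lemma Bt_jfraction : exists2 C : PR,
  congX n.+1 (B * (1 - (r%:P + 'X)%:P * 'X - b%:P * 'X^2 * C)) 1 &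
  congX n.+1 (C * (1 - a%:P * 'X - b%:P * 'X^2 * C)) 1.
Proof.
set E2 := 1 - 'X * (y * B).
have [iE2 E2_iE2] : exists iE2, congX n.+1 (E2 * iE2) 1.
  by apply: congX_inv; rewrite coefB coef1 coefXM subr0.
have CE2 : congX n.+1 (B * iE2 * E2) B.
  transitivity (B * (E2 * iE2)); first by apply: congX_eq; ring.
  by rewrite E2_iE2 mulr1; reflexivity.
have C_rec : congX n.+1 (B * iE2 * (1 - a%:P * 'X - b%:P * 'X^2 * (B * iE2))) 1.
  apply: (congX_mul_cancel (u := E2 ^+ 2) (v := iE2 ^+ 2)).
    by rewrite -exprMn E2_iE2 expr1n; reflexivity.
  transitivity ((B * iE2 * E2) * ((1 - a%:P * 'X) * E2 - b%:P * 'X^2 * (B * iE2 * E2))).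
    by apply: congX_eq; ring.
  rewrite CE2 mul1r.
  transitivity (E2 ^+ 2 + ((B - y * 'X * B ^+ 2) -
      (1 + (r%:P)%:P * 'X * B + (s%:P)%:P * 'X^2 * B ^+ 2))).
    by apply: congX_eq; rewrite /E2; ring.
  by rewrite Bt_functional_eq; apply: congX_eq; ring.
exists (B * iE2) => //.
transitivity ((B * iE2 * E2) * (1 - a%:P * 'X - b%:P * 'X^2 * (B * iE2)) + y * 'X * B).
  by rewrite CE2; apply: congX_eq; ring.
transitivity (E2 * (B * iE2 * (1 - a%:P * 'X - b%:P * 'X^2 * (B * iE2))) + y * 'X * B).
  by apply: congX_eq; ring.
by rewrite C_rec; apply: congX_eq; rewrite /E2; ring.
Qed.

End TildeB.

Theorem mainTheorem15 (R : comNzRingType) (r s : R) :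
  first_col_of_inverse (riordan (Gser r s) (Fser r s)) (Bt r s) /\
  fps_limit (fun m => jconv (alphaB r) (betaB r s) m 0) (Bt r s).
Proof.
split; first by apply: riordan_first_col => n; apply: Gser_Bt_Fser.
move=> n; have [C B_rec C_rec] := Bt_jfraction r s n.
pose S j := if j is 0 then trunc n.+1 (Bt r s) else C.
have S_rec j : congX n.+1 (S j * (1 - (alphaB r j)%:P * 'X - (betaB r s j.+1)%:P * 'X^2 * S j.+1)) 1.
  by case: j => [|j]; [exact: B_rec | exact: C_rec].
exists n => m le_nm.
have := coef_congX (jconv_congX S_rec m 0) (n := n).
by rewrite /S !coef_trunc //; apply; lia.
Qed.
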